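(* Let $G=G_1\vee G_2$ be the join of two cographs $G_1,G_2$ (so $G$ is a connected cograph with at least two vertices). Define $D^*=\{w\}$ if there is a vertex $w\in V(G)$ with $N[w]=V(G)$ (choose one such $w$), and otherwise $D^*=\{x,y\}$ for an arbitrary choice of $x\in V(G_1)$ and $y\in V(G_2)$. Then $D^*$ is a minimum dominating set of $G$, and for every dominating set $D$ of $G$ we have $D\leftrightarrow_{|D|+1} D^*$.
   Context: All graphs are finite, simple and undirected. The join $G_1\vee G_2$ of vertex-disjoint graphs has vertex set $V(G_1)\cup V(G_2)$ and edge set $E(G_1)\cup E(G_2)\cup\{vw: v\in V(G_1), w\in V(G_2)\}$. Cographs are defined recursively: a single vertex is a cograph, and the disjoint union and the join of two cographs are cographs. $N[w]$ denotes the closed neighbourhood of $w$. A set $D\subseteq V(G)$ is a dominating set if every vertex of $G$ is in $D$ or adjacent to a vertex of $D$. Two dominating sets $D,D'$ are adjacent if $|D\triangle D'|=1$. For dominating sets $D_p,D_q$ and an integer $k>0$, write $D_p\leftrightarrow_k D_q$ if there is a sequence $D_0=D_p,\dots,D_\ell=D_q$ ($\ell\ge0$) of dominating sets of $G$ with consecutive sets adjacent and $|D_i|\le k$ for all $i$. *)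

From mathcomp Require Import all_boot.
Set Implicit Arguments. Unset Strict Implicit. Unset Printing Implicit Defensive.

Definition simple_graph (T : finType) (e : rel T) : Prop :=
  symmetric e /\ irreflexive e.

(* cograph_on e A : the subgraph of (T,e) induced on A is a cograph
   (recursive definition: single vertex, disjoint union, join). *)
Inductive cograph_on (T : finType) (e : rel T) : {set T} -> Prop :=
| cograph_single (x : T) : cograph_on e [set x]
| cograph_union (A B : {set T}) :
    [disjoint A & B] -> cograph_on e A -> cograph_on e B ->
    (forall a b, a \in A -> b \in B -> ~~ e a b) ->
    cograph_on e (A :|: B)
| cograph_join (A B : {set T}) :
    [disjoint A & B] -> cograph_on e A -> cograph_on e B ->
    (forall a b, a \in A -> b \in B -> e a b) ->
    cograph_on e (A :|: B).

Definition is_join_of_cographs (T : finType) (e : rel T) (V1 V2 : {set T}) : Prop :=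
  [/\ [disjoint V1 & V2], V1 :|: V2 = [set: T],
      cograph_on e V1, cograph_on e V2 &
      (forall a b, a \in V1 -> b \in V2 -> e a b)].

Definition closed_nbhd (T : finType) (e : rel T) (w : T) : {set T} :=
  [set v | (v == w) || e w v].

Definition dominating (T : finType) (e : rel T) (D : {set T}) : bool :=
  [forall v, (v \in D) || [exists u in D, e u v]].

Definition min_dominating (T : finType) (e : rel T) (D : {set T}) : Prop :=
  dominating e D /\ forall D', dominating e D' -> #|D| <= #|D'|.

Definition symdiff (T : finType) (A B : {set T}) : {set T} := (A :\: B) :|: (B :\: A).

Definition ds_adjacent (T : finType) (D D' : {set T}) : bool := #|symdiff D D'| == 1.

Definition reconf (T : finType) (e : rel T) (k : nat) (Dp Dq : {set T}) : Prop :=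
  exists s : seq {set T},
    [/\ path (@ds_adjacent T) Dp s, last Dp s = Dq &
        all (fun D => dominating e D && (#|D| <= k)) (Dp :: s)].

(* A dominating set can be grown to any superset and shrunk back to any
   dominating subset one vertex at a time, so two dominating sets of size at
   most k with a common dominating subset are k-reconfigurable.  With a
   universal vertex w, {w} is a minimum dominating set and D -> D + w -> {w}.
   Otherwise every dominating set has at least two vertices, while {x, y}
   dominates by the join; for z in D take a in {x, y} on the side opposite
   to z, so that {a, z} dominates, and go D -> D + a -> {x, y, z} -> {x, y}
   through the common dominating subsets D, {a, z} and {x, y}. *)
From mathcomp Require Import all_boot.

Set Implicit Arguments.
Unset Strict Implicit.
Unset Printing Implicit Defensive.

Section Reconfiguration.
Variables (T : finType) (e : rel T).

Lemma ds_adjacentC (A B : {set T}) : ds_adjacent A B = ds_adjacent B A.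
Proof. by rewrite /ds_adjacent /symdiff setUC. Qed.

Lemma ds_adjacent_setU1 (A : {set T}) x : x \notin A -> ds_adjacent A (x |: A).
Proof.
move=> xNA; rewrite /ds_adjacent (_ : symdiff _ _ = [set x]) ?cards1 //.
apply/setP=> v; rewrite !inE; case: (eqVneq v x) => [->|] /=.
  by rewrite (negbTE xNA).
by case: (v \in A).
Qed.

Lemma dominating_subset (A B : {set T}) :
  A \subset B -> dominating e A -> dominating e B.
Proof.
move=> sAB /forallP domA; apply/forallP=> v.
case/orP: (domA v) => [vA | /existsP [u /andP [uA euv]]].
  by rewrite (subsetP sAB).
by apply/orP; right; apply/existsP; exists u; rewrite (subsetP sAB u uA) euv.
Qed.

Lemma dominating_card_gt0 (D : {set T}) (t : T) : dominating e D -> 0 < #|D|.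
Proof.
move/forallP/(_ t)/orP=> [tD | /existsP [u /andP [uD _]]]; apply/card_gt0P.
  by exists t.
by exists u.
Qed.

Lemma dominating_set1 w : dominating e [set w] = (closed_nbhd e w == [set: T]).
Proof.
apply/forallP/eqP=> [domw | Nw v].
  apply/setP=> v; rewrite !inE; case/orP: (domw v) => [|/existsP [u]].
    by rewrite inE => ->.
  by rewrite inE => /andP [/eqP -> ->]; rewrite orbT.
have : v \in closed_nbhd e w by rewrite Nw inE.
rewrite !inE => /orP [-> // | ewv].
by apply/orP; right; apply/existsP; exists w; rewrite inE eqxx ewv.
Qed.

Lemma dominating_card_gt1 (D : {set T}) (t : T) :
  ~~ [exists w, closed_nbhd e w == [set: T]] -> dominating e D -> 1 < #|D|.
Proof.
move=> noUniv domD; rewrite ltn_neqAle eq_sym (dominating_card_gt0 t domD) andbT.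
apply/cards1P=> -[v Dv]; move: domD noUniv; rewrite Dv dominating_set1 => Nv.
by move/existsPn/(_ v); rewrite Nv.
Qed.

Lemma reconf_refl k (A : {set T}) :
  dominating e A -> #|A| <= k -> reconf e k A A.
Proof. by move=> domA leAk; exists [::]; split => //=; rewrite domA leAk. Qed.

Lemma reconf_trans k (A B C : {set T}) :
  reconf e k A B -> reconf e k B C -> reconf e k A C.
Proof.
move=> [s1 [p1 l1 a1]] [s2 [p2 l2 a2]]; exists (s1 ++ s2); split.
- by rewrite cat_path p1 l1.
- by rewrite last_cat l1.
- by move: a1 a2; rewrite -cat_cons all_cat => -> /= /andP [].
Qed.

Lemma reconf_sym k (A B : {set T}) : reconf e k A B -> reconf e k B A.
Proof.
move=> [s [pAs <- allAs]]; exists (rev (belast A s)); split.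
- by rewrite rev_path (@eq_path _ _ (@ds_adjacent T)) // => D1 D2 /=; rewrite ds_adjacentC.
- by case: s {pAs allAs} => //= D s; rewrite rev_cons last_rcons.
- by rewrite -rev_rcons -lastI all_rev.
Qed.

Lemma reconf_setU1 k (A : {set T}) x :
  dominating e A -> #|x |: A| <= k -> reconf e k A (x |: A).
Proof.
move=> domA lexAk; have sAxA := subsetUr [set x] A.
have leAk := leq_trans (subset_leq_card sAxA) lexAk.
have [xA | xNA] := boolP (x \in A).
  by rewrite (setUidPr (_ : [set x] \subset A)) ?sub1set //; apply: reconf_refl.
exists [:: x |: A]; split => //=; first by rewrite ds_adjacent_setU1.
by rewrite domA (dominating_subset sAxA) // leAk lexAk.
Qed.

Lemma reconf_subset k (A B : {set T}) :
  A \subset B -> dominating e A -> #|B| <= k -> reconf e k A B.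
Proof.
move=> sAB domA; rewrite -(setUidPr sAB) -(set_enum B).
elim: (enum B) => [|x s IHs] leBk.
  by rewrite set_nil setU0 in leBk *; apply: reconf_refl.
rewrite set_cons setUCA in leBk *.
have domAs : dominating e (A :|: [set:: s]) by apply: dominating_subset domA; apply: subsetUl.
apply: reconf_trans (reconf_setU1 domAs leBk).
by apply: IHs; apply: leq_trans leBk; apply/subset_leq_card/subsetUr.
Qed.

Lemma reconf_via_subset k (A B C : {set T}) :
  C \subset A -> C \subset B -> dominating e C -> #|A| <= k -> #|B| <= k ->
  reconf e k A B.
Proof.
move=> sCA sCB domC leAk leBk.
exact: reconf_trans (reconf_sym (reconf_subset sCA domC leAk)) (reconf_subset sCB domC leBk).
Qed.

End Reconfiguration.

Lemma leq_cardsU1 (T : finType) (x : T) (A : {set T}) : #|x |: A| <= #|A| + 1.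
Proof. by rewrite cardsU1 addnC leq_add2l leq_b1. Qed.

Section Join.
Variables (T : finType) (e : rel T) (V1 V2 : {set T}).
Hypothesis e_sym : symmetric e.
Hypothesis V12_cover : V1 :|: V2 = [set: T].
Hypothesis V12_join : forall a b, a \in V1 -> b \in V2 -> e a b.

Lemma dominating_join_pair u v : u \in V1 -> v \in V2 -> dominating e [set u; v].
Proof.
move=> uV1 vV2; apply/forallP=> t; apply/orP; right; apply/existsP.
have : t \in V1 :|: V2 by rewrite V12_cover inE.
rewrite inE => /orP [tV1 | tV2].
  by exists v; rewrite !inE eqxx orbT e_sym V12_join.
by exists u; rewrite !inE eqxx V12_join.
Qed.

Lemma join_partner x y z : x \in V1 -> y \in V2 ->
  exists2 a, a \in [set x; y] & dominating e [set a; z].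
Proof.
move=> xV1 yV2; have : z \in V1 :|: V2 by rewrite V12_cover inE.
rewrite inE => /orP [zV1 | zV2].
  exists y; first by rewrite !inE eqxx orbT.
  by rewrite setUC; apply: dominating_join_pair.
exists x; first by rewrite !inE eqxx.
exact: dominating_join_pair.
Qed.

End Join.

Theorem lemma6 (T : finType) (e : rel T) (V1 V2 : {set T}) :
  simple_graph e ->
  is_join_of_cographs e V1 V2 ->
  forall Dstar : {set T},
    (if [exists w, closed_nbhd e w == [set: T]]
     then exists w, closed_nbhd e w = [set: T] /\ Dstar = [set w]
     else exists x y, [/\ x \in V1, y \in V2 & Dstar = [set x; y]]) ->
    min_dominating e Dstar /\
    (forall D : {set T}, dominating e D -> reconf e (#|D| + 1) D Dstar).
Proof.
move=> [e_sym _] [_ cover _ _ join] Dstar.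
case: ifP => [_ [w [Nw ->]] | noUniv [x [y [xV1 yV2 ->]]]].
  have domw : dominating e [set w] by rewrite dominating_set1 Nw.
  split=> [|D domD].
    by split=> // D' /(dominating_card_gt0 w); rewrite cards1.
  have le_wD := leq_cardsU1 w D.
  apply: (reconf_trans (reconf_via_subset (subxx D) (subsetUr _ _) domD (leq_addr 1 _) le_wD)).
  apply: (reconf_via_subset _ (subxx _) domw le_wD); first by rewrite sub1set setU11.
  by rewrite cards1 addn1.
have domxy := dominating_join_pair e_sym cover join xV1 yV2.
have two_le_dom D : dominating e D -> 2 <= #|D|.
  by apply: (dominating_card_gt1 x); rewrite noUniv.
have lexy2 : #|[set x; y]| <= 2 by rewrite cards2 ltnS leq_b1.
split=> [|D domD]; first by split=> // D' /two_le_dom; apply: leq_trans.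
have [z zD] := card_gt0P (dominating_card_gt0 x domD).
have [a axy domaz] := join_partner e_sym cover join z xV1 yV2.
have le_aD := leq_cardsU1 a D.
have le_zxy : #|z |: [set x; y]| <= #|D| + 1.
  by apply: leq_trans (leq_cardsU1 _ _) _; rewrite leq_add2r (leq_trans lexy2) ?two_le_dom.
have le_xy : #|[set x; y]| <= #|D| + 1.
  by rewrite (leq_trans lexy2) // (leq_trans (two_le_dom _ domD)) ?leq_addr.
have saz_aD : [set a; z] \subset a |: D by rewrite setUS // sub1set.
have saz_zxy : [set a; z] \subset z |: [set x; y].
  by rewrite subUset !sub1set setU11 setU1r.
apply: (reconf_trans (reconf_via_subset (subxx D) (subsetUr _ _) domD (leq_addr 1 _) le_aD)).
apply: (reconf_trans (reconf_via_subset saz_aD saz_zxy domaz le_aD le_zxy)).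
exact: reconf_via_subset (subsetUr _ _) (subxx _) domxy le_zxy le_xy.
Qed.
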